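(* Let $A\in\mathcal A_n$, let $T=\tau(A)$, and fix an integer $g\ge0$. Then $\operatorname{gldim}(A)\le g$ if and only if there are no two siblings $i<j$ in $T$ such that the subtree rooted at $i$ has depth at least $\lfloor g/2\rfloor$ and the subtree rooted at $j$ has depth at least $\lceil g/2\rceil$.
   Context: $\mathcal A_n$ is the set of ordered products $A=A_1\times\cdots\times A_k$ of connected linear Nakayama algebras (over an algebraically closed field) with $n$ simple modules in total; its Kupisch series $[c_0,\dots,c_{n-1}]$ is the concatenation of those of the factors, where a connected linear Nakayama algebra with $m$ simple modules has Kupisch series $[c_0,\dots,c_{m-1}]$, $c_i=\dim e_iA$, characterized by $c_{i+1}+1\ge c_i\ge2$ for $0\le i<m-1$ and $c_{m-1}=1$. The global dimension of $A$ is the maximum of those of its factors. $\tau(A)$ is the tree on $\{0,\dots,n\}$, rooted at $n$, in which the parent of $i$ is $i+c_i$ for $0\le i<n$. Siblings are distinct vertices with the same parent, compared by their labels. The depth of a subtree rooted at a vertex $v$ is the maximal number of edges on a path from $v$ down to a descendant of $v$. *)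

From mathcomp Require Import all_boot.
Set Implicit Arguments. Unset Strict Implicit. Unset Printing Implicit Defensive.

(* A connected linear Nakayama algebra with m simple modules, given by its
   Kupisch series c = [c_0, ..., c_{m-1}], c_i = dim e_i A. *)
Definition connected_kupisch (c : seq nat) : Prop :=
  let m := size c in
  0 < m /\
  (forall i, i.+1 < m -> 2 <= nth 0 c i /\ nth 0 c i <= (nth 0 c i.+1).+1) /\
  nth 0 c m.-1 = 1.

(* An element of \mathcal A_n: an ordered list of connected linear Nakayama
   algebras (given by their Kupisch series) with n simples in total. *)
Definition in_An (n : nat) (A : seq (seq nat)) : Prop :=
  (forall c, c \in A -> connected_kupisch c) /\ sumn (map size A) = n.

(* Kupisch series of the product: concatenation. *)
Definition kupisch (A : seq (seq nat)) : seq nat := flatten A.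

(* Projective dimension of the indecomposable (uniserial) module M(i,k) with
   top S_i and length k (1 <= k <= c_i) over the Nakayama algebra with
   Kupisch series c, computed through minimal projective resolutions:
   M(i,k) is projective iff k = c_i, otherwise its first syzygy is
   M(i+k, c_i - k).  [fuel] bounds the recursion (indices strictly increase,
   so fuel = size c suffices). *)
Fixpoint pdim_fuel (c : seq nat) (fuel i k : nat) : nat :=
  if fuel is f.+1 then
    if k == nth 0 c i then 0 else (pdim_fuel c f (i + k) (nth 0 c i - k)).+1
  else 0.

(* Global dimension of a connected linear Nakayama algebra:
   the maximum of the projective dimensions of the simple modules S_i = M(i,1). *)
Definition gldim_conn (c : seq nat) : nat :=
  \max_(i < size c) pdim_fuel c (size c) i 1.

Definition gldim (A : seq (seq nat)) : nat := \max_(c <- A) gldim_conn c.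

(* The tree tau(A) on {0,...,n}, rooted at n, with parent i + c_i for i < n. *)
Definition tparent (c : seq nat) (i : nat) : nat :=
  if i < size c then i + nth 0 c i else i.

(* u = v_0, v_1 = parent v_0, ..., v_k = v is a downward path of k edges
   from v to its descendant u (each v_t, t < k, is a non-root vertex). *)
Definition down_path (c : seq nat) (u v k : nat) : bool :=
  (u <= size c) && (iter k (tparent c) u == v) &&
  [forall t : 'I_k, iter t (tparent c) u < size c].

(* Depth of the subtree rooted at v: the maximal number of edges on a path
   from v down to a descendant of v.  Paths have at most n edges. *)
Definition depth (c : seq nat) (v : nat) : nat :=
  \max_(u < (size c).+1) \max_(k < (size c).+1 | down_path c u v k) k.

(* Siblings: distinct vertices with the same parent (the root n has no parent). *)
Definition siblings (c : seq nat) (i j : nat) : Prop :=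
  i != j /\ i < size c /\ j < size c /\ tparent c i = tparent c j.

From mathcomp Require Import all_boot zify.
Set Implicit Arguments. Unset Strict Implicit. Unset Printing Implicit Defensive.

(* Write p for the parent map of tau(A); it is monotone and p i > i off the
   root.  The indecomposable M(a, e - a) is the interval [a, e) with
   a < e <= p a; it is projective iff e = p a, and otherwise its syzygy is
   [e, p a).  So pd S_i > g iff the sequence x_0 = i, x_1 = i + 1,
   x_(k+2) = p x_k is strictly increasing up to x_(g+2), and by monotonicity
   of p it suffices that x_g < x_(g+1) < x_(g+2).  Along such a chain x_k has
   depth >= floor(k/2) and x_(k+1) depth >= ceil(k/2); climbing further until
   two consecutive terms share their parent produces the siblings.
   Conversely, for siblings a < b the last vertex i whose floor(g/2)-th
   ancestor lies at or before a (g even), resp. whose ceil(g/2)-th ancestor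
   lies before p a (g odd), starts such a chain. *)

Definition monotone_tree (C : seq nat) : Prop :=
  {homo tparent C : i j / i <= j} /\
  (forall i, i < size C -> i < tparent C i <= size C).

Lemma tparent_id C i : size C <= i -> tparent C i = i.
Proof. by rewrite /tparent leqNgt => /negbTE ->. Qed.

Lemma tparent_lt_size C i : i < tparent C i -> i < size C.
Proof. by rewrite /tparent; case: ifP => //; rewrite ltnn. Qed.

Lemma tparent_cat C D i : tparent (C ++ D) i =
  if i < size C then tparent C i else size C + tparent D (i - size C).
Proof.
rewrite /tparent size_cat nth_cat; case: (ltnP i (size C)) => iC.
  by rewrite ltn_addr.
by do 2!case: ifP; lia.
Qed.

Lemma tparent_catl C D i : i < size C -> tparent (C ++ D) i = tparent C i.
Proof. by rewrite tparent_cat => ->. Qed.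

Lemma tparent_catr C D i : tparent (C ++ D) (size C + i) = size C + tparent D i.
Proof. by rewrite tparent_cat ltnNge leq_addr addKn. Qed.

Lemma monotone_tree_cat C D :
  monotone_tree C -> monotone_tree D -> monotone_tree (C ++ D).
Proof.
move=> [monoC boundC] [monoD boundD]; split => [i j le_ij|i].
  rewrite !tparent_cat; case: (ltnP i (size C)) => iC; case: (ltnP j (size C)) => jC.
  - exact: monoC.
  - by have := boundC i iC; lia.
  - lia.
  - by have := monoD (i - size C) (j - size C); lia.
rewrite tparent_cat size_cat => iCD; case: (ltnP i (size C)) => iC.
  by have := boundC i iC; lia.
by have := boundD (i - size C); lia.
Qed.

Lemma monotone_tree_connected c : connected_kupisch c -> monotone_tree c.
Proof.
move=> [c_gt0 [c_step c_last]].
have tparent_last : tparent c (size c).-1 = size c.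
  by rewrite /tparent prednK // leqnn c_last addn1 prednK.
have mono : {homo tparent c : i j / i <= j}.
  apply: homo_leq => [//|j i k|i]; first exact: leq_trans.
  case: (ltnP i.+1 (size c)) => [iS|]; last rewrite leq_eqVlt => /orP[/eqP iS|iS].
  - by have := c_step i iS; rewrite /tparent iS (ltnW iS); lia.
  - have -> : i = (size c).-1 by lia.
    by rewrite tparent_last prednK // tparent_id.
  - by rewrite !tparent_id // ltnW.
split=> // i ic; have := mono i (size c) (ltnW ic).
rewrite (tparent_id (leqnn _)) => ->; rewrite andbT.
case: (ltnP i.+1 (size c)) => [iS|iS].
  by have := c_step i iS; rewrite /tparent ic; lia.
have -> : i = (size c).-1 by lia.
by rewrite tparent_last prednK.
Qed.

Lemma monotone_tree_kupisch A :
  (forall c, c \in A -> connected_kupisch c) -> monotone_tree (kupisch A).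
Proof.
elim: A => [_|c A IH conn]; first by split => // i j; rewrite !tparent_id.
apply: monotone_tree_cat; first by apply/monotone_tree_connected/conn/mem_head.
by apply: IH => d dA; apply/conn; rewrite inE dA orbT.
Qed.

Lemma crossing (F : nat -> nat) c lo hi : lo <= hi -> F lo < c -> c <= F hi ->
  exists2 i, lo <= i < hi & F i < c <= F i.+1.
Proof.
elim: hi => [|hi IH] le_lo_hi Flo cF.
  by move: le_lo_hi Flo; rewrite leqn0 => /eqP ->; rewrite ltnNge cF.
move: le_lo_hi; rewrite leq_eqVlt ltnS => /orP[/eqP lo_eq|le_lo_hi].
  by move: Flo; rewrite lo_eq ltnNge cF.
case: (ltnP (F hi) c) => [Fhi|cFhi]; first by exists hi; rewrite ?le_lo_hi ?ltnSn ?Fhi.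
have [i /andP[lo_i i_hi] cross] := IH le_lo_hi Flo cFhi.
by exists i; rewrite // lo_i ltnS ltnW.
Qed.

(* A pair x stands for the interval module [x.1, x.2), i.e. M(x.1, x.2 - x.1). *)
Definition syzygy (C : seq nat) (x : nat * nat) : nat * nat := (x.2, tparent C x.1).

Definition nonproj (C : seq nat) (x : nat * nat) : bool := x.1 < x.2 < tparent C x.1.

Fixpoint pdim_exceeds (C : seq nat) (t : nat) (x : nat * nat) : bool :=
  nonproj C x && (if t is t'.+1 then pdim_exceeds C t' (syzygy C x) else true).

Definition gldim_exceeds (C : seq nat) (g : nat) : bool :=
  has (fun i => pdim_exceeds C g (i, i.+1)) (iota 0 (size C)).

Section KupischTree.
Variable C : seq nat.
Hypothesis treeC : monotone_tree C.
Local Notation n := (size C).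
Local Notation p := (tparent C).

Lemma homo_tparent : {homo p : i j / i <= j}.
Proof. by case: treeC. Qed.

Lemma ltn_tparent i : i < n -> i < p i.
Proof. by case: treeC => _ bound /bound/andP[]. Qed.

Lemma leq_tparent i : i <= p i.
Proof. by case: (ltnP i n) => [/ltn_tparent/ltnW|/tparent_id ->]. Qed.

Lemma tparent_le_size i : i <= n -> p i <= n.
Proof.
rewrite leq_eqVlt => /orP[/eqP ->|iC]; first by rewrite tparent_id.
by case: treeC => _ /(_ i iC)/andP[].
Qed.

Lemma homo_iter_tparent k : {homo iter k p : i j / i <= j}.
Proof. by move=> i j le_ij; elim: k => //= k IH; apply: homo_tparent. Qed.

Lemma leq_iter_tparent k u : u <= iter k p u.
Proof. by elim: k => //= k IH; apply: leq_trans IH (leq_tparent _). Qed.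

Lemma iter_tparent_le_size k u : u <= n -> iter k p u <= n.
Proof. by move=> un; elim: k => //= k IH; apply: tparent_le_size. Qed.

Lemma nonproj_lt_size x : nonproj C x -> x.1 < n.
Proof. by case/andP=> lt12 /(ltn_trans lt12)/tparent_lt_size. Qed.

Lemma nonprojE x : x.1 < x.2 <= p x.1 -> nonproj C x = (x.2 != p x.1).
Proof. by case/andP=> lt12 le2p; rewrite /nonproj lt12 ltn_neqAle le2p andbT. Qed.

Lemma pdim_exceeds_nonproj t x : pdim_exceeds C t x -> nonproj C x.
Proof. by case: t => [|t] /andP[]. Qed.

Lemma pdim_fuel_syzygy f x : x.1 < x.2 <= p x.1 ->
  pdim_fuel C f.+1 x.1 (x.2 - x.1) =
  if nonproj C x
  then (pdim_fuel C f (syzygy C x).1 ((syzygy C x).2 - (syzygy C x).1)).+1 else 0.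
Proof.
move=> x_ok; rewrite nonprojE //; case/andP: x_ok => lt12 le2p.
have x1n := tparent_lt_size (leq_trans lt12 le2p).
move: le2p; rewrite /= /tparent x1n => le2p.
have -> : (x.2 - x.1 == nth 0 C x.1) = (x.2 == x.1 + nth 0 C x.1) by apply/eqP/eqP; lia.
by case: eqP => //= _; congr (_.+1); congr (pdim_fuel _ _ _ _); lia.
Qed.

Lemma pdim_exceeds_fuel f t x : x.1 < x.2 <= p x.1 ->
  t < pdim_fuel C f x.1 (x.2 - x.1) -> pdim_exceeds C t x.
Proof.
elim: t f x => [|t IH] [|f] x x_ok //; rewrite pdim_fuel_syzygy //=;
  case: ifP => // nonproj_x; rewrite ltnS ?andbT // => t_lt.
apply: (IH f (syzygy C x) _ t_lt); case/andP: nonproj_x => lt12 lt2p.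
by rewrite /= lt2p homo_tparent // ltnW.
Qed.

Lemma fuel_pdim_exceeds f t x : t < f ->
  pdim_exceeds C t x -> t < pdim_fuel C f x.1 (x.2 - x.1).
Proof.
elim: t f x => [|t IH] [|f] x // t_lt /andP[nonproj_x ex_syz].
all: have x_ok : x.1 < x.2 <= p x.1 by case/andP: nonproj_x => -> /ltnW.
all: rewrite pdim_fuel_syzygy // nonproj_x ltnS //; exact: IH.
Qed.

Lemma pdim_exceeds_bound t x : pdim_exceeds C t x -> x.2 + t < n.
Proof.
elim: t x => [|t IH] x /andP[nonproj_x ex_syz].
all: have le_pn := tparent_le_size (ltnW (nonproj_lt_size nonproj_x)).
all: case/andP: nonproj_x => _ lt2p.
- lia.
- have /= := IH _ ex_syz; lia.
Qed.

Lemma pdim_fuel_gt f t x : n <= f -> x.1 < x.2 <= p x.1 ->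
  (t < pdim_fuel C f x.1 (x.2 - x.1)) = pdim_exceeds C t x.
Proof.
move=> nf x_ok; apply/idP/idP; first exact: pdim_exceeds_fuel.
move=> ex_t; have := pdim_exceeds_bound ex_t.
by move=> bound; apply: (fuel_pdim_exceeds _ ex_t); lia.
Qed.

(* Strictness propagates backwards along a resolution: if two consecutive
   terms were equal, so would be their images under p. *)
Lemma pdim_exceeds_last t x : x.1 <= x.2 <= p x.1 ->
  nonproj C (iter t (syzygy C) x) -> pdim_exceeds C t x.
Proof.
elim: t x => [|t IH] x /andP[le12 le2p]; first by rewrite /= andbT.
rewrite iterSr => nonproj_last.
have ex_syz : pdim_exceeds C t (syzygy C x).
  by apply: IH nonproj_last; rewrite /= le2p homo_tparent.
have /andP[/= lt2p ltpp] := pdim_exceeds_nonproj ex_syz.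
rewrite /= ex_syz andbT /nonproj lt2p andbT ltn_neqAle le12 andbT.
by apply: contraTneq ltpp => ->; rewrite ltnn.
Qed.

Lemma iter_syzygy_double s x : iter s.*2 (syzygy C) x = (iter s p x.1, iter s p x.2).
Proof. by elim: s => [|s IH]; [case: x | rewrite doubleS !iterS IH]. Qed.

Lemma down_pathP u v k :
  reflect [/\ u <= n, iter k p u = v & forall t, t < k -> iter t p u < n]
          (down_path C u v k).
Proof.
apply: (iffP idP) => [|[un path_uv all_lt]].
  case/andP=> /andP[un /eqP path_uv] /forallP all_lt.
  by split=> // t tk; apply: (all_lt (Ordinal tk)).
by rewrite /down_path un path_uv eqxx; apply/forallP => t; apply: all_lt.
Qed.

Lemma down_path_length u v k : down_path C u v k -> k <= n.
Proof.
case/down_pathP => un _ all_lt.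
have : u + k <= iter k p u.
  elim: k all_lt => [|k IH] all_lt; first by rewrite addn0.
  rewrite addnS /=; apply: leq_trans (ltn_tparent (all_lt k (ltnSn k))).
  by rewrite ltnS IH // => t tk; apply/all_lt/ltnW.
by have := iter_tparent_le_size k un; lia.
Qed.

Lemma depth_ge u v k : down_path C u v k -> k <= depth C v.
Proof.
move=> path_uv; have un : u < n.+1 by case/down_pathP: path_uv.
have kn : k < n.+1 by rewrite ltnS (down_path_length path_uv).
by apply: (bigmax_sup (Ordinal un)) => //; apply: (bigmax_sup (Ordinal kn)).
Qed.

Lemma depth_attained v : v <= n -> exists u, down_path C u v (depth C v).
Proof.
move=> vn; rewrite /depth; have [u ->] := eq_bigmax
  (fun u : 'I_n.+1 => \max_(k < n.+1 | down_path C u v k) k) (ltac:(by rewrite card_ord)).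
case: (pickP (fun k : 'I_n.+1 => down_path C u v k)) => [k path_k|no_path].
  have paths_gt0 : 0 < #|[pred k : 'I_n.+1 | down_path C u v k]|.
    by apply/card_gt0P; exists k.
  by have [k' path_k' ->] := eq_bigmax_cond val paths_gt0; exists u.
rewrite big_pred0 //; exists v; apply/down_pathP; split=> //.
Qed.

Lemma depth_tparent v : v < n -> (depth C v).+1 <= depth C (p v).
Proof.
move=> vn; have [u /down_pathP[un path_uv all_lt]] := depth_attained (ltnW vn).
apply: (@depth_ge u); apply/down_pathP; split=> [//||t]; first by rewrite iterS path_uv.
by rewrite ltnS leq_eqVlt => /orP[/eqP ->|/all_lt]; rewrite ?path_uv.
Qed.

Lemma depth_ancestor v k : v <= n -> k <= depth C v -> exists w, iter k p w = v.
Proof.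
move=> vn le_k; have [u /down_pathP[_ path_uv _]] := depth_attained vn.
by exists (iter (depth C v - k) p u); rewrite -iterD subnKC.
Qed.

Definition deep_pair t (x : nat * nat) : Prop :=
  t./2 <= depth C x.1 /\ t.+1./2 <= depth C x.2.

Lemma deep_pair_syzygy t x : x.1 < n -> deep_pair t x -> deep_pair t.+1 (syzygy C x).
Proof. by move=> x1n [d1 d2]; split=> //; apply: leq_trans (depth_tparent x1n). Qed.

Lemma deep_pair_le t t' x : t <= t' -> deep_pair t' x -> deep_pair t x.
Proof.
by move=> le_t [d1 d2]; split; [apply: leq_trans d1 | apply: leq_trans d2]; apply: half_leq.
Qed.

Lemma siblings_of_nonproj t x : nonproj C x -> deep_pair t x ->
  exists a b, [/\ a < b, siblings C a b & deep_pair t (a, b)].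
Proof.
have [m] := ubnP (n - x.2); elim: m => // m IH in t x *.
rewrite ltnS => measure nonproj_x deep_x.
have x1n := nonproj_lt_size nonproj_x.
have /andP[lt12 lt2p] := nonproj_x; have le_pn := tparent_le_size (ltnW x1n).
case: (eqVneq (p x.1) (p x.2)) => [same_parent|new_parent].
  by exists x.1, x.2; split; rewrite // /siblings neq_ltn lt12 (leq_trans lt2p le_pn).
have nonproj_syz : nonproj C (syzygy C x).
  by rewrite /nonproj /= lt2p ltn_neqAle new_parent homo_tparent // ltnW.
have [|a [b [lt_ab sib_ab deep_ab]]] := IH _ _ _ nonproj_syz (deep_pair_syzygy x1n deep_x).
  by rewrite /=; lia.
by exists a, b; split=> //; apply: deep_pair_le deep_ab.
Qed.

Lemma pdim_exceeds_deep t0 t x : pdim_exceeds C t x -> deep_pair t0 x ->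
  nonproj C (iter t (syzygy C) x) /\ deep_pair (t0 + t) (iter t (syzygy C) x).
Proof.
elim: t t0 x => [|t IH] t0 x /andP[nonproj_x ex_syz] deep_x; first by rewrite addn0.
rewrite iterSr -addSnnS; apply: IH ex_syz _.
exact: deep_pair_syzygy (nonproj_lt_size nonproj_x) deep_x.
Qed.

Lemma siblings_even_chain a b s : a < b -> siblings C a b ->
  s <= depth C a -> s <= depth C b ->
  exists2 i, i < n & nonproj C (iter s.*2 (syzygy C) (i, i.+1)).
Proof.
move=> lt_ab [_ [an [bn pab]]] da db.
have [wa Fwa] := depth_ancestor (ltnW an) da.
have [wb Fwb] := depth_ancestor (ltnW bn) db.
have mono := homo_iter_tparent s.
have le_wab : wa <= wb.
  by rewrite leqNgt; apply/negP => /ltnW/mono; rewrite Fwa Fwb leqNgt lt_ab.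
have := crossing (F := iter s p) (c := a.+1) le_wab; rewrite Fwa Fwb ltnSn.
case=> // i /andP[wa_i i_wb] /andP[Fi_le Fi1_gt].
have Fi : iter s p i = a by apply/eqP; rewrite eqn_leq -ltnS Fi_le -{1}Fwa mono.
exists i; first by rewrite (leq_ltn_trans (leq_iter_tparent s i)) ?Fi.
rewrite iter_syzygy_double /nonproj /= Fi Fi1_gt pab.
by rewrite (leq_ltn_trans (mono _ _ i_wb)) // Fwb ltn_tparent.
Qed.

Lemma siblings_odd_chain a b s : a < b -> siblings C a b ->
  s <= depth C a -> s.+1 <= depth C b ->
  exists2 i, i < n & nonproj C (iter s.*2.+1 (syzygy C) (i, i.+1)).
Proof.
move=> lt_ab [_ [an [bn pab]]] da db.
have [wa Fwa] := depth_ancestor (ltnW an) da.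
have [wb Gwb] := depth_ancestor (ltnW bn) db.
have monoF := homo_iter_tparent s.
have monoG := homo_iter_tparent s.+1.
have b_lt_pa : b < p a by rewrite pab ltn_tparent.
have Gwa : iter s.+1 p wa = p a by rewrite iterS Fwa.
have le_wba : wb <= wa.
  rewrite leqNgt; apply/negP => /ltnW/monoG; rewrite Gwa Gwb.
  by rewrite leqNgt b_lt_pa.
have := crossing (F := iter s.+1 p) (c := p a) le_wba; rewrite Gwb Gwa leqnn.
case=> // i /andP[wb_i i_wa] /andP[Gi_lt Gi1_ge].
have Fi1_le : iter s p i.+1 <= a by rewrite -Fwa monoF.
have Gi_ge : b <= iter s.+1 p i by rewrite -Gwb monoG.
exists i; first exact: leq_trans (leq_iter_tparent s i.+1) (leq_trans Fi1_le (ltnW an)).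
rewrite iterS iter_syzygy_double /nonproj /=.
move: Gi_lt Gi1_ge Gi_ge => /= Gi_lt Gi1_ge Gi_ge.
by rewrite (leq_ltn_trans Fi1_le (leq_trans lt_ab Gi_ge)) (leq_trans Gi_lt Gi1_ge).
Qed.

Lemma gldim_exceedsP g : reflect
  (exists i j, [/\ i < j, siblings C i j, g./2 <= depth C i & g.+1./2 <= depth C j])
  (gldim_exceeds C g).
Proof.
apply: (iffP hasP) => [[i _ ex_i]|[a [b [lt_ab sib_ab da db]]]].
  have [nonproj_last deep_last] :=
    pdim_exceeds_deep (t0 := 0) ex_i (conj (leq0n _) (leq0n _)).
  have [a [b [lt_ab sib_ab [da db]]]] := siblings_of_nonproj nonproj_last deep_last.
  by exists a, b.
have [k kn nonproj_k] : exists2 k, k < n & nonproj C (iter g (syzygy C) (k, k.+1)).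
  have [[s g_eq]|[s g_eq]] : (exists s, g = s.*2) \/ (exists s, g = s.*2.+1).
    by case odd_g: (odd g); [right | left]; exists g./2; rewrite -[LHS]odd_double_half odd_g.
  - move: da db; rewrite g_eq /= uphalf_double half_double => da db.
    exact: siblings_even_chain sib_ab da db.
  - move: da db; rewrite g_eq /= uphalf_double half_double => da db.
    exact: siblings_odd_chain sib_ab da db.
exists k; first by rewrite mem_iota.
by apply: pdim_exceeds_last nonproj_k; rewrite /= leqnSn ltn_tparent.
Qed.

End KupischTree.

Lemma pdim_exceeds_catl C D t x : monotone_tree C -> x.1 < size C ->
  pdim_exceeds (C ++ D) t x = pdim_exceeds C t x.
Proof.
move=> [_ bound]; elim: t x => [|t IH] x x1C; rewrite /= /nonproj tparent_catl //.
case/boolP: (x.1 < x.2 < tparent C x.1) => //= /andP[_ lt2p].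
rewrite /syzygy tparent_catl // IH //= (leq_trans lt2p) //.
by case/andP: (bound _ x1C).
Qed.

Lemma pdim_exceeds_catr C D t x :
  pdim_exceeds (C ++ D) t (size C + x.1, size C + x.2) = pdim_exceeds D t x.
Proof.
elim: t x => [|t IH] x /=; rewrite /nonproj /= tparent_catr !ltn_add2l //.
by rewrite /syzygy /= tparent_catr -IH.
Qed.

Lemma gldim_exceeds_cat C D g : monotone_tree C ->
  gldim_exceeds (C ++ D) g = gldim_exceeds C g || gldim_exceeds D g.
Proof.
move=> treeC; rewrite /gldim_exceeds size_cat iotaD has_cat [0 + _]addnC iotaDl.
rewrite has_map; congr (_ || _).
  by apply: eq_in_has => i; rewrite mem_iota => /andP[_ iC]; apply: pdim_exceeds_catl.
by apply: eq_has => i /=; rewrite -addnS (pdim_exceeds_catr C D g (i, i.+1)).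
Qed.

Lemma gldim_conn_gt c g : connected_kupisch c -> (g < gldim_conn c) = gldim_exceeds c g.
Proof.
move=> /monotone_tree_connected treec.
have simple_gt i : i < size c -> (g < pdim_fuel c (size c) i 1) = pdim_exceeds c g (i, i.+1).
  move=> ic; rewrite -(subSnn i) (@pdim_fuel_gt c treec _ g (i, i.+1)) //= ltnSn.
  by case: treec => _ /(_ i ic)/andP[].
rewrite ltnNge /gldim_conn /gldim_exceeds; apply/negbLR.
apply/bigmax_leqP/hasPn => [le_g i|nex i _].
  rewrite mem_iota add0n => /andP[_ ic].
  by rewrite -simple_gt // -leqNgt (le_g (Ordinal ic)).
have ic := ltn_ord i; by rewrite leqNgt simple_gt // nex // mem_iota.
Qed.

Lemma gldim_gt A g : (forall c, c \in A -> connected_kupisch c) ->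
  (g < gldim A) = gldim_exceeds (kupisch A) g.
Proof.
rewrite /gldim; elim: A => [|c A IH] conn; first by rewrite big_nil.
have conn_c : connected_kupisch c by apply/conn/mem_head.
rewrite big_cons leq_max gldim_conn_gt // IH => [|d dA]; last first.
  by apply/conn; rewrite inE dA orbT.
by rewrite /kupisch /= gldim_exceeds_cat //; apply: monotone_tree_connected.
Qed.

Theorem lemma3p9 (n : nat) (A : seq (seq nat)) (g : nat) :
  in_An n A ->
  (gldim A <= g <->
   ~ (exists i j : nat,
        [/\ i < j, siblings (kupisch A) i j,
            g %/ 2 <= depth (kupisch A) i
          & (g + 1) %/ 2 <= depth (kupisch A) j])).
Proof.
move=> [conn _]; rewrite leqNgt gldim_gt // divn2 addn1 divn2.
exact: iff_sym (rwP (negPP (gldim_exceedsP (monotone_tree_kupisch conn) g))).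
Qed.
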